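(* Let $(C_*,\partial,\ell)$ be an ascending chain complex over a field $\kappa$ such that for every $k$ the filtered vector space $(C_k,\ell|_{C_k})$ satisfies the best approximation property. Then there are subcomplexes $A_*$ and $\mathcal{H}_*$ of $C_*$ such that: (1) for each $k$, $C_k=A_k\oplus\mathcal{H}_k$ and $\ell(a+h)=\max\{\ell(a),\ell(h)\}$ for all $a\in A_k$, $h\in\mathcal{H}_k$; (2) $\partial|_{\mathcal{H}_*}=0$, and for each $k$ the restriction to $\mathcal{H}_k$ of the projection $\ker\partial|_{C_k}\to H_k(C_* )$ is an isomorphism of filtered vector spaces $(\mathcal{H}_k,\ell|_{\mathcal{H}_k})\to(H_k(C_* ),\rho|_{H_k(C_* )})$, where $\rho$ is the spectral invariant function; (3) $H_k(A_* )=0$ for all $k$.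
   Context: An ascending chain complex over $\kappa$ is a triple $(C_*,\partial,\ell)$ where $(C_*=\bigoplus_{k\in\mathbb{Z}}C_k,\partial)$ is a chain complex of $\kappa$-vector spaces and $\ell\colon C_*\to\mathbb{R}\cup\{-\infty\}$ satisfies: $\ell(x)=-\infty$ iff $x=0$; $\ell(\sum_i c_ix_i)\le\max\{\ell(x_i): c_i\neq 0\}$, with equality if the $x_i$ lie in pairwise distinct degrees; and $\ell(\partial x)\le\ell(x)$. A filtered vector space $(V,\ell)$ (with $\ell(v)=-\infty$ iff $v=0$, $\ell(cv)=\ell(v)$ for $c\ne0$, $\ell(v+w)\le\max\{\ell(v),\ell(w)\}$) satisfies the best approximation property if for every proper subspace $W\subsetneq V$ and every $v\in V\setminus W$ there is $w_0\in W$ with $\ell(v-w_0)\le\ell(v-w)$ for all $w\in W$. The spectral invariant function $\rho\colon H_*(C_* )\to\mathbb{R}\cup\{-\infty\}$ is $\rho(h)=\inf\{\ell(c): c\in\ker\partial,\ [c]=h\}$. *)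

From HB Require Import structures.
From mathcomp Require Import all_boot all_order all_algebra.
From mathcomp Require Import boolp classical_sets reals constructive_ereal ereal.
Set Implicit Arguments. Unset Strict Implicit. Unset Printing Implicit Defensive.
Import Order.TTheory GRing.Theory Num.Theory.
Local Open Scope classical_set_scope.
Local Open Scope ring_scope.

(* A graded chain complex over a field K is given degreewise:
   C k  is the degree-k space (k : int), and  d k : C (k+1) -> C k  is the
   differential out of degree k+1 (so every degree is of the form k+1). *)

Section Defs.
Variables (K : fieldType) (R : realType).

Definition subspace (V : lmodType K) (S : set V) : Prop :=
  S 0 /\ forall (a : K) (x y : V), S x -> S y -> S (a *: x + y).

Definition filtered (V : lmodType K) (l : V -> \bar R) : Prop :=
  (forall v, l v != +oo%E) /\
  (forall v, l v = -oo%E <-> v = 0) /\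
  (forall (c : K) v, c != 0 -> l (c *: v) = l v) /\
  (forall v w, (l (v + w)%R <= maxe (l v) (l w))%E).

Definition best_approximation (V : lmodType K) (l : V -> \bar R) : Prop :=
  forall (W : set V), subspace W -> W != setT ->
  forall v, ~ W v ->
  exists2 w0, W w0 & forall w, W w -> (l (v - w0)%R <= l (v - w)%R)%E.

Definition ascending_chain_complex (C : int -> lmodType K)
  (d : forall k : int, {linear C (k + 1) -> C k})
  (l : forall k : int, C k -> \bar R) : Prop :=
  [/\ forall k (x : C (k + 1 + 1)), d k (d (k + 1) x) = 0,
      forall k, filtered (l k)
    & forall k (x : C (k + 1)), (l k (d k x) <= l (k + 1)%R x)%E].

Section Complex.
Variables (C : int -> lmodType K) (d : forall k : int, {linear C (k + 1) -> C k}).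

Definition cx_cycle (k : int) (z : C (k + 1)) : Prop := d k z = 0.
Definition cx_boundary (k : int) (z : C (k + 1)) : Prop :=
  exists b : C (k + 1 + 1), d (k + 1) b = z.
Definition homologous (k : int) (z w : C (k + 1)) : Prop := cx_boundary (z - w).

Definition spec_inv (l : forall k : int, C k -> \bar R) (k : int) (z : C (k + 1))
  : \bar R :=
  ereal_inf [set l (k + 1) c | c in [set c | cx_cycle c /\ homologous c z]].

Definition subcomplex (S : forall k : int, set (C k)) : Prop :=
  (forall k, subspace (S k)) /\ (forall k x, S (k + 1) x -> S k (d k x)).

Definition direct_sum (k : int) (A H : set (C k)) : Prop :=
  (forall x, exists a h, [/\ A a, H h & x = a + h]) /\
  (forall x, A x -> H x -> x = 0).

(* restriction to Hs (k+1) (a space of cycles) of the projection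
   ker d_k -> H_{k+1}(C) is an isomorphism of filtered vector spaces onto
   (H_{k+1}(C), rho): it is surjective, injective, and l = rho on Hs. *)
Definition homology_filtered_iso (l : forall k : int, C k -> \bar R)
  (k : int) (Hs : set (C (k + 1))) : Prop :=
  [/\ forall z, cx_cycle z -> exists2 h, Hs h & homologous z h,
      forall h1 h2, Hs h1 -> Hs h2 -> homologous h1 h2 -> h1 = h2
    & forall h, Hs h -> l (k + 1) h = spec_inv l h].

Definition acyclic_at (A : forall k : int, set (C k)) (k : int) : Prop :=
  forall a, A (k + 1) a -> cx_cycle a ->
  exists2 b, A (k + 1 + 1) b & d (k + 1) b = a.

End Complex.
End Defs.

(* The best approximation property makes every subspace W of a subspace S
   admit an orthogonal complement U inside S, i.e. S = W + U with
   l (w + u) = max (l w) (l u): by Zorn's lemma take a maximal U orthogonal to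
   W; if W + U missed some x in S, the residual x - y0 of a best approximation
   y0 of x in W + U would be orthogonal to W + U, so U could be extended by the
   line through it.  In each degree choose an orthogonal complement H_k of the
   boundaries B_k inside the cycles Z_k, and an orthogonal complement A'_k of
   Z_k inside C_k; then A_k := B_k + A'_k and H_k do the job.  Orthogonality to
   B_k makes l on H_k the minimum of l over each homology class, and a cycle in
   A_k has its A'_k-part in Z_k and A'_k, hence zero, so it is a boundary of an
   element of A. *)
From Pilot Require Import Defs.
From HB Require Import structures.
From mathcomp Require Import all_boot all_order all_algebra.
From mathcomp Require Import boolp classical_sets reals constructive_ereal ereal.
Import Order.TTheory GRing.Theory Num.Theory.
Set Implicit Arguments. Unset Strict Implicit.
Local Open Scope classical_set_scope.
Local Open Scope ring_scope.

Section Subspaces.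
Variables (K : fieldType) (V : lmodType K).

Definition sumset (W U : set V) : set V :=
  [set v | exists w u, [/\ W w, U u & v = w + u]].

Definition line (m : V) : set V := [set c *: m | c in [set: K]].

Lemma subspace0 (Y : set V) : Defs.subspace Y -> Y 0.
Proof. by case. Qed.

Lemma subspaceL (Y : set V) a x y :
  Defs.subspace Y -> Y x -> Y y -> Y (a *: x + y).
Proof. by case=> _; apply. Qed.

Lemma subspaceZ (Y : set V) a x : Defs.subspace Y -> Y x -> Y (a *: x).
Proof.
by move=> subY Yx; rewrite -[_ *: x]addr0; apply: subspaceL => //; apply: subspace0.
Qed.

Lemma subspaceD (Y : set V) x y : Defs.subspace Y -> Y x -> Y y -> Y (x + y).
Proof. by rewrite -[x in x + _]scale1r; apply: subspaceL. Qed.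

Lemma subspaceN (Y : set V) x : Defs.subspace Y -> Y x -> Y (- x).
Proof. by rewrite -scaleN1r; apply: subspaceZ. Qed.

Lemma subspaceB (Y : set V) x y : Defs.subspace Y -> Y x -> Y y -> Y (x - y).
Proof. by move=> subY Yx Yy; apply: subspaceD => //; apply: subspaceN. Qed.

Lemma subspaceT : Defs.subspace [set: V].
Proof. by []. Qed.

Lemma subspace_sumset (Y U : set V) :
  Defs.subspace Y -> Defs.subspace U -> Defs.subspace (sumset Y U).
Proof.
move=> subY subU; split; first by exists 0, 0; rewrite addr0; split=> //; apply: subspace0.
move=> a _ _ [w1 [u1 [Y1 U1 ->]]] [w2 [u2 [Y2 U2 ->]]].
exists (a *: w1 + w2), (a *: u1 + u2); split; [exact: subspaceL|exact: subspaceL|].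
by rewrite scalerDr addrACA.
Qed.

Lemma sumset_regroup (B H Z A' : set V) :
  Z `<=` sumset B H -> sumset Z A' `<=` sumset (sumset B A') H.
Proof.
move=> ZBH _ [z [a [/ZBH [b [h [Bb Hh ->]]] A'a ->]]].
by exists (b + a), h; split; [exists b, a|by []|rewrite addrAC].
Qed.

Lemma subspace_line m : Defs.subspace (line m).
Proof.
split; first by exists 0; rewrite ?scale0r.
by move=> a _ _ [c _ <-] [c' _ <-]; exists (a * c + c'); rewrite // scalerDl scalerA.
Qed.

End Subspaces.

Section FilteredSpace.
Variables (K : fieldType) (R : realType) (V : lmodType K) (l : V -> \bar R).
Hypothesis filt : filtered l.

Lemma filt0 : l 0 = -oo%E.
Proof. by case: filt => _ [-> _]. Qed.

Lemma filt_eqNy v : l v = -oo%E -> v = 0.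
Proof. by case: filt => _ [/(_ v) []]. Qed.

Lemma filtZ c v : c != 0 -> l (c *: v) = l v.
Proof. by case: filt => _ [_ [+ _]]; apply. Qed.

Lemma filtN v : l (- v) = l v.
Proof. by rewrite -scaleN1r filtZ // oppr_eq0 oner_neq0. Qed.

Lemma filtD v w : (l (v + w) <= maxe (l v) (l w))%E.
Proof. by case: filt => _ [_ [_]]; apply. Qed.

Definition orthogonal (W U : set V) :=
  forall w u, W w -> U u -> l (w + u) = maxe (l w) (l u).

Definition is_orthogonal_complement (S W U : set V) :=
  [/\ Defs.subspace U, U `<=` S, orthogonal W U & S `<=` sumset W U].

Lemma orthogonal_meet0 (W U : set V) x :
  Defs.subspace U -> orthogonal W U -> W x -> U x -> x = 0.
Proof.
move=> subU oWU Wx Ux; have := oWU x (- x) Wx (subspaceN subU Ux).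
by rewrite subrr filt0 filtN maxxx => /esym/filt_eqNy.
Qed.

(* The ultrametric inequality, applied also to (m + y) - m, turns the
   minimality of l m on m + Y into orthogonality of the line through m to Y. *)
Lemma minimal_residual_orthogonal (Y : set V) m :
  Defs.subspace Y -> (forall y, Y y -> (l m <= l (m + y))%E) ->
  orthogonal (line m) Y.
Proof.
move=> subY min_m.
have orth_m y : Y y -> l (m + y) = maxe (l m) (l y).
  move=> Yy; apply/le_anti/andP; split; first exact: filtD.
  rewrite ge_max min_m //= -[y in l y](addKr m) addrC.
  by apply: (le_trans (filtD _ _)); rewrite filtN ge_max lexx min_m.
move=> _ y [c _ <-] Yy; have [->|c0] := eqVneq c 0.
  by rewrite scale0r add0r filt0 (max_idPr (leNye _)).
have -> : c *: m + y = c *: (m + c^-1 *: y).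
  by rewrite scalerDr scalerA divff // scale1r.
rewrite !filtZ // orth_m ?filtZ ?invr_neq0 //.
exact: subspaceZ.
Qed.

Lemma orthogonal_sumset_line (W U : set V) m :
  Defs.subspace W -> Defs.subspace U -> orthogonal W U ->
  orthogonal (line m) (sumset W U) -> orthogonal W (sumset U (line m)).
Proof.
move=> subW subU oWU oWUm w _ Ww [u [_ [Uu [c _ <-] ->]]].
have Wu_sum : sumset W U (w + u) by exists w, u.
have u_sum : sumset W U u by exists 0, u; rewrite add0r; split=> //; apply: subspace0.
have cm_line : line m (c *: m) by exists c.
rewrite addrA addrC (oWUm _ _ cm_line Wu_sum) oWU // addrC (oWUm _ _ cm_line u_sum).
by rewrite maxCA.
Qed.

Lemma orthogonal_sumset_compl (B H Z A' : set V) :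
  Defs.subspace Z -> B `<=` Z -> H `<=` Z ->
  orthogonal B H -> orthogonal Z A' -> orthogonal (sumset B A') H.
Proof.
move=> subZ BZ HZ oBH oZA' _ h [b [a [Bb A'a ->]]] Hh.
have Zb : Z b by apply: BZ.
have Zbh : Z (b + h) by apply: subspaceD => //; apply: HZ.
rewrite (oZA' b a) // addrAC (oZA' (b + h) a) // oBH //.
by rewrite maxAC.
Qed.

Hypothesis best : best_approximation l.

Lemma orthogonal_extension (W U : set V) x :
  Defs.subspace W -> Defs.subspace U -> orthogonal W U -> ~ sumset W U x ->
  exists m, sumset W U (x - m) /\ orthogonal W (sumset U (line m)).
Proof.
move=> subW subU oWU WUx.
have subWU := subspace_sumset subW subU.
have WU_neqT : sumset W U != setT by apply/eqP => WUT; apply: WUx; rewrite WUT.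
have [y0 WUy0 best_y0] := best subWU WU_neqT WUx.
exists (x - y0); split; first by rewrite opprB addrC subrK.
apply: orthogonal_sumset_line => //; apply: minimal_residual_orthogonal => // y WUy.
have -> : x - y0 + y = x - (y0 - y) by rewrite opprB addrA addrAC.
by apply: best_y0; apply: subspaceB.
Qed.

Lemma orthogonal_complement_exists (S W : set V) :
  Defs.subspace S -> Defs.subspace W -> W `<=` S ->
  exists U, is_orthogonal_complement S W U.
Proof.
move=> subS subW WS.
pose P U := [/\ U `<=` S, orthogonal W U &
  forall a x y, U x -> U y -> U (a *: x + y)].
have [U [[US oWU linU] U_max]] : exists U, P U /\ forall B, U `<` B -> ~ P B.
  apply: Zorn_bigcup => F FP F_total; split.
  - by move=> x [X /FP[XS _ _] Xx]; apply: XS.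
  - by move=> w u Ww [X /FP[_ oWX _] Xu]; apply: oWX.
  - move=> a x y [X FX Xx] [Y FY Yy].
    have [XY|YX] := F_total X Y FX FY.
    + by exists Y => //; have [_ _ linY] := FP Y FY; apply: linY => //; apply: XY.
    + by exists X => //; have [_ _ linX] := FP X FX; apply: linX => //; apply: YX.
(* The empty set passes the Zorn predicate, so [U 0] needs maximality. *)
have U0 : U 0.
  apply: contrapT => nU0; apply: (U_max [set 0]); split.
  - move=> x Ux; exfalso; apply: nU0.
    by have := linU (-1) x x Ux Ux; rewrite scaleN1r addNr.
  - by move=> zeroU; apply: nU0; apply: zeroU.
  - by move=> _ ->; apply: subspace0 subS.
  - by move=> w _ Ww ->; rewrite addr0 filt0 (max_idPl (leNye _)).
  - by move=> a _ _ -> ->; rewrite scaler0 addr0.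
have subU : Defs.subspace U by [].
exists U; split=> // x Sx; apply: contrapT => WUx.
have [m [WUxm oWUm]] := orthogonal_extension subW subU oWU WUx.
have Sm : S m.
  rewrite -[m](subKr x); apply: subspaceB => //.
  by case: WUxm => w [u [Ww Uu ->]]; apply: subspaceD => //; [apply: WS|apply: US].
apply: (U_max (sumset U (line m))); split.
- move=> u Uu; exists u, 0; split; rewrite ?addr0 //.
  by exists 0; rewrite ?scale0r.
- move=> Um_sub; apply: WUx.
  have Um : U m.
    apply: Um_sub; exists 0, m; split; rewrite ?add0r //.
    by exists 1; rewrite ?scale1r.
  case: WUxm => w [u [Ww Uu e]]; exists w, (u + m).
  by split=> //; [apply: subspaceD|rewrite addrA -e subrK].
- move=> _ [u [_ [Uu [c _ <-] ->]]].
  by apply: subspaceD => //; [apply: US|apply: subspaceZ].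
- exact: oWUm.
- by case: (subspace_sumset subU (subspace_line m)).
Qed.

End FilteredSpace.

Lemma dependent_choice (I : Type) (T : I -> Type) (P : forall i, T i -> Prop) :
  (forall i, exists x, P i x) -> exists f : forall i, T i, forall i, P i (f i).
Proof. by move=> ex; exists (fun i => sval (cid (ex i))) => i; apply: svalP. Qed.

Section Cycles.
Variables (K : fieldType) (C : int -> lmodType K).
Variable d : forall k : int, {linear C (k + 1) -> C k}.

(* Defined in every degree [k], not only in those syntactically of the form
   [j + 1], hence the transport along [k = j + 1]. *)
Definition cycles k : set (C k) :=
  fun z => forall j (e : k = j + 1), d j (eq_rect k C z (j + 1) e) = 0.

Definition boundaries k : set (C k) := [set d k x | x in [set: C (k + 1)]].

Arguments cycles : clear implicits.
Arguments boundaries : clear implicits.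

Lemma cyclesE k z : cycles (k + 1) z <-> cx_cycle d z.
Proof.
split=> [/(_ k erefl) //|dz0 j e].
have ejk : j = k by apply: (addIr 1); rewrite -e.
by subst j; rewrite (eq_irrelevance e erefl).
Qed.

Lemma subspace_cycles k : Defs.subspace (cycles k).
Proof.
split=> [j e|a x y Zx Zy j e]; subst k; first by rewrite /= linear0.
by rewrite /= linearP (Zx j erefl) (Zy j erefl) scaler0 addr0.
Qed.

Lemma subspace_boundaries k : Defs.subspace (boundaries k).
Proof.
split; first by exists 0; rewrite ?linear0.
by move=> a _ _ [x _ <-] [y _ <-]; exists (a *: x + y); rewrite ?linearP.
Qed.

Lemma boundaries_sub_cycles :
  (forall k (x : C (k + 1 + 1)), d k (d (k + 1) x) = 0) ->
  forall k, boundaries k `<=` cycles k.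
Proof. by move=> dd k _ [x _ <-] j e; subst k; apply: dd. Qed.

End Cycles.

Arguments cycles {K C} d k.
Arguments boundaries {K C} d k.

Section Decomposition.
Variables (K : fieldType) (R : realType) (C : int -> lmodType K).
Variables (d : forall k : int, {linear C (k + 1) -> C k})
  (l : forall k : int, C k -> \bar R).
Arguments l k : clear implicits.
Hypotheses (dd : forall k (x : C (k + 1 + 1)), d k (d (k + 1) x) = 0)
  (filt : forall k, filtered (l k)).

Variables Hs A' : forall k : int, set (C k).
Arguments Hs k : clear implicits.
Arguments A' k : clear implicits.
Hypotheses
  (Hs_compl : forall k,
     is_orthogonal_complement (l k) (cycles d k) (boundaries d k) (Hs k))
  (A'_compl : forall k, is_orthogonal_complement (l k) [set: C k] (cycles d k) (A' k)).

Let subHs k : Defs.subspace (Hs k). Proof. by case: (Hs_compl k). Qed.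
Let Hs_cycles k : Hs k `<=` cycles d k. Proof. by case: (Hs_compl k). Qed.
Let orth_boundaries_Hs k : orthogonal (l k) (boundaries d k) (Hs k).
Proof. by case: (Hs_compl k). Qed.
Let cycles_sumset k : cycles d k `<=` sumset (boundaries d k) (Hs k).
Proof. by case: (Hs_compl k). Qed.
Let subA' k : Defs.subspace (A' k). Proof. by case: (A'_compl k). Qed.
Let orth_cycles_A' k : orthogonal (l k) (cycles d k) (A' k).
Proof. by case: (A'_compl k). Qed.
Let chains_sumset k : [set: C k] `<=` sumset (cycles d k) (A' k).
Proof. by case: (A'_compl k). Qed.

Definition acyclic_part k : set (C k) := sumset (boundaries d k) (A' k).
Arguments acyclic_part k : clear implicits.

Lemma Hs_cycle k h : Hs (k + 1) h -> d k h = 0.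
Proof. by move=> /Hs_cycles /cyclesE. Qed.

Lemma subcomplex_Hs : subcomplex d Hs.
Proof. by split=> // k x /Hs_cycle ->; apply: subspace0. Qed.

Lemma subcomplex_acyclic_part : subcomplex d acyclic_part.
Proof.
split=> [k|k x _]; first exact: subspace_sumset (subspace_boundaries d k) _.
by exists (d k x), 0; split; rewrite ?addr0 //; [exists x|apply: subspace0].
Qed.

Lemma orthogonal_acyclic_part k : orthogonal (l k) (acyclic_part k) (Hs k).
Proof.
apply: (orthogonal_sumset_compl (subspace_cycles d k)) => //.
exact: boundaries_sub_cycles.
Qed.

Lemma direct_sum_acyclic_part k : direct_sum (acyclic_part k) (Hs k).
Proof.
split=> [x|x Ax Hx].
  have [a [h [Aa Hh ->]]] := sumset_regroup (@cycles_sumset k) (@chains_sumset k x I).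
  by exists a, h.
exact: (orthogonal_meet0 (filt k) (subHs k) (@orthogonal_acyclic_part k)) Ax Hx.
Qed.

Lemma spec_inv_Hs k h : Hs (k + 1) h -> l (k + 1) h = spec_inv d l h.
Proof.
move=> Hh; apply/le_anti/andP; split.
  apply: le_ereal_inf_tmp => _ [c [_ [b db]] <-].
  rewrite -(subrK h c) orth_boundaries_Hs //; last by exists b.
  by rewrite le_max lexx orbT.
apply: ereal_inf_lbound; exists h => //; split; first exact: Hs_cycle.
by exists 0; rewrite linear0 subrr.
Qed.

Lemma homology_filtered_iso_Hs k : homology_filtered_iso d l (Hs (k + 1)).
Proof.
split; last exact: spec_inv_Hs.
  move=> z /cyclesE /cycles_sumset [_ [h [[c _ <-] Hh ->]]].
  by exists h => //; exists c; rewrite addrK.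
move=> h1 h2 H1 H2 [b db]; apply/eqP; rewrite -subr_eq0; apply/eqP.
have Bh : boundaries d (k + 1) (h1 - h2) by exists b.
exact: (orthogonal_meet0 (filt _) (subHs _) (@orth_boundaries_Hs _)) Bh
  (subspaceB (subHs _) H1 H2).
Qed.

Lemma acyclic_acyclic_part k : acyclic_at d acyclic_part k.
Proof.
move=> _ [_ [a' [[c _ <-] A'a' ->]]] /cyclesE Zba'.
have Zdc : cycles d (k + 1) (d (k + 1) c) by apply: (boundaries_sub_cycles dd); exists c.
have Za' : cycles d (k + 1) a'.
  rewrite -(addKr (d (k + 1) c) a').
  exact: subspaceD (subspace_cycles d _) (subspaceN (subspace_cycles d _) Zdc) Zba'.
have -> : a' = 0 :=
  (orthogonal_meet0 (filt _) (subA' _) (@orth_cycles_A' _)) Za' A'a'.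
have [ca [h [Aca Hh ->]]] := (direct_sum_acyclic_part (k + 1 + 1)).1 c.
by exists ca => //; rewrite linearD (Hs_cycle Hh) !addr0.
Qed.

End Decomposition.

Theorem proposition3p12 (K : fieldType) (R : realType)
  (C : int -> lmodType K) (d : forall k : int, {linear C (k + 1) -> C k})
  (l : forall k : int, C k -> \bar R) :
  ascending_chain_complex d l ->
  (forall k, best_approximation (l k)) ->
  exists (A Hs : forall k : int, set (C k)),
    [/\ subcomplex d A, subcomplex d Hs,
        (forall k, direct_sum (A k) (Hs k) /\
           forall a h, A k a -> Hs k h -> l k (a + h) = maxe (l k a) (l k h)),
        (forall k h, Hs (k + 1) h -> d k h = 0) /\
        (forall k, homology_filtered_iso d l (Hs (k + 1)))
      & forall k, acyclic_at d A k].
Proof.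
move=> [dd filt _] best.
have [Hs Hs_compl] := dependent_choice (fun k => orthogonal_complement_exists
  (filt k) (best k) (subspace_cycles d k) (subspace_boundaries d k)
  (boundaries_sub_cycles dd (k := k))).
have [A' A'_compl] := dependent_choice (fun k => orthogonal_complement_exists
  (filt k) (best k) (subspaceT _) (subspace_cycles d k) (fun _ _ => I)).
exists (acyclic_part d A'), Hs; split.
- exact: subcomplex_acyclic_part.
- exact: subcomplex_Hs.
- by move=> k; split; [apply: direct_sum_acyclic_part|apply: orthogonal_acyclic_part].
- by split=> k; [apply: Hs_cycle|apply: homology_filtered_iso_Hs].
- by move=> k; apply: acyclic_acyclic_part.
Qed.
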